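(* Let $f\in C^\infty(\mathbb{R})$ with $f'(0)=0$, let $u_0\in C^\infty(\mathbb{R})$ be bounded with bounded derivatives, and let $u\in C^\infty((0,\infty)\times\mathbb{R},\mathbb{R})$ be the smooth solution of $u_t=u_{xx}+f'(u)u_x$, $u(0,\cdot)=u_0$. Assume there exists $(t_0,\xi_0)\in(0,\infty)\times\mathbb{R}$ such that $$u(t_0,\xi_0)=0,\quad u_x(t_0,\xi_0)=0,\quad u_{xx}(t_0,\xi_0)\neq0.$$ Then for $t<t_0$ near $t_0$ there exist two roots $\xi_{1,2}(t)$ of $u(t,\cdot)$ near $\xi_0$ such that $$\xi_{1,2}(t)-\xi_0=\pm\sqrt{2(t_0-t)}+\mathcal{O}(t_0-t),\qquad u_x(t,\xi_{1,2}(t))=\pm\sqrt{2(t_0-t)}\,u_{xx}(t_0,\xi_0)+\mathcal{O}(t_0-t)$$ as $t\to t_0^-$, and for $t>t_0$ near $t_0$ no roots of $u(t,\cdot)$ near $\xi_0$ exist. *)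

From Stdlib Require Import Reals List.
From Coquelicot Require Import Coquelicot.
Open Scope R_scope.

Definition smooth1 (f : R -> R) : Prop :=
  forall (n : nat) (x : R), ex_derive_n f n x.

Definition pt (u : R -> R -> R) : R -> R -> R :=
  fun t x => Derive (fun s => u s x) t.
Definition px (u : R -> R -> R) : R -> R -> R :=
  fun t x => Derive (fun y => u t y) x.

(* Iterated partial derivative along a list of directions
   (true = d/dt, false = d/dx), innermost derivative last in the list. *)
Fixpoint pd (l : list bool) (u : R -> R -> R) : R -> R -> R :=
  match l with
  | nil => u
  | b :: l' => if b then pt (pd l' u) else px (pd l' u)
  end.

Definition smooth2_on (D : R -> R -> Prop) (u : R -> R -> R) : Prop :=
  forall (l : list bool) (t x : R), D t x ->
    ex_derive (fun s => pd l u s x) t /\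
    ex_derive (fun y => pd l u t y) x /\
    continuous (fun z : R * R => pd l u (fst z) (snd z)) (t, x).

(* With a = u_xx(t0, xi0), the equation gives u_t(t0, xi0) = a as well, so near the fold point
     u(t, x) = a ((x - xi0)^2 / 2 + (t - t0)) + O(|x - xi0|^3 + |x - xi0| |t - t0| + |t - t0|^2),
   the remainder being controlled through the mean value theorem by local bounds on derivatives
   of order two and three.  For t > t0 the main term has the sign of a and dominates the
   remainder, so u has no zero.  For t < t0 the main term is a/2 ((x - xi0)^2 - 2 (t0 - t)); at
   distance O(t0 - t) on either side of xi0 +- sqrt (2 (t0 - t)) it already dominates the
   remainder with opposite signs, and the intermediate value theorem produces the two roots. *)

From Stdlib Require Import Reals Lra Psatz List Classical IndefiniteDescription.
From Coquelicot Require Import Coquelicot.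
Import ListNotations.
Open Scope R_scope.

Lemma mvt_affine_bound (g dg : R -> R) (a c x B : R) :
  (forall z, Rabs (z - c) <= Rabs (x - c) -> is_derive g z (dg z) /\ Rabs (dg z - a) <= B) ->
  Rabs (g x - g c - a * (x - c)) <= B * Rabs (x - c).
Proof.
  intros Hg.
  assert (Hseg : forall z, Rmin c x <= z <= Rmax c x -> Rabs (z - c) <= Rabs (x - c)).
  { intros z Hz. apply Rabs_le_between_min_max. rewrite Rmin_comm, Rmax_comm. exact Hz. }
  assert (Hh : forall z, Rmin c x <= z <= Rmax c x ->
             is_derive (fun z => g z - a * (z - c)) z (dg z - a)).
  { intros z Hz. apply (is_derive_minus g (fun z => a * (z - c)) z (dg z) a).
    - apply Hg, Hseg, Hz.
    - auto_derive; [exact I | ring]. }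
  destruct (MVT_gen (fun z => g z - a * (z - c)) c x (fun z => dg z - a)) as [z [Hz Hmvt]].
  - intros z Hz. apply Hh. lra.
  - intros z Hz. apply continuity_pt_filterlim.
    apply (ex_derive_continuous (fun z => g z - a * (z - c))).
    exists (dg z - a). apply Hh, Hz.
  - replace (g x - g c - a * (x - c)) with ((dg z - a) * (x - c))
      by (rewrite Rminus_diag in Hmvt; lra).
    rewrite Rabs_mult. apply Rmult_le_compat_r; [apply Rabs_pos | apply Hg, Hseg, Hz].
Qed.

Lemma mvt_bound (g dg : R -> R) (c x B : R) :
  (forall z, Rabs (z - c) <= Rabs (x - c) -> is_derive g z (dg z) /\ Rabs (dg z) <= B) ->
  Rabs (g x - g c) <= B * Rabs (x - c).
Proof.
  intros Hg. replace (g x - g c) with (g x - g c - 0 * (x - c)) by ring.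
  apply (mvt_affine_bound g dg). intros z Hz. rewrite Rminus_0_r. exact (Hg z Hz).
Qed.

Lemma taylor2_bound (g g1 g2 g3 : R -> R) (c x M : R) :
  (forall z, Rabs (z - c) <= Rabs (x - c) ->
     is_derive g z (g1 z) /\ is_derive g1 z (g2 z) /\ is_derive g2 z (g3 z) /\ Rabs (g3 z) <= M) ->
  Rabs (g1 x - g1 c - g2 c * (x - c)) <= M * Rabs (x - c) ^ 2 /\
  Rabs (g x - g c - g1 c * (x - c) - g2 c / 2 * (x - c) ^ 2) <= M * Rabs (x - c) ^ 3.
Proof.
  intros Hg.
  assert (HM : 0 <= M).
  { destruct (Hg c) as (_ & _ & _ & H3); [rewrite Rminus_diag, Rabs_R0; apply Rabs_pos |].
    eapply Rle_trans; [apply Rabs_pos | exact H3]. }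
  assert (Hfirst : forall z, Rabs (z - c) <= Rabs (x - c) ->
            Rabs (g1 z - g1 c - g2 c * (z - c)) <= M * Rabs (z - c) ^ 2).
  { intros z Hz. replace (M * Rabs (z - c) ^ 2) with ((M * Rabs (z - c)) * Rabs (z - c)) by ring.
    apply (mvt_affine_bound g1 g2). intros w Hw.
    split; [apply Hg; lra |].
    eapply Rle_trans; [apply (mvt_bound g2 g3 c w M) | apply Rmult_le_compat_l; assumption].
    intros y Hy. split; apply Hg; lra. }
  split; [apply Hfirst; lra |].
  replace (g x - g c - g1 c * (x - c) - g2 c / 2 * (x - c) ^ 2) with
    ((g x - g1 c * (x - c) - g2 c / 2 * (x - c) ^ 2)
     - (g c - g1 c * (c - c) - g2 c / 2 * (c - c) ^ 2))
    by ring.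
  replace (M * Rabs (x - c) ^ 3) with (M * Rabs (x - c) ^ 2 * Rabs (x - c)) by ring.
  apply (mvt_bound (fun z => g z - g1 c * (z - c) - g2 c / 2 * (z - c) ^ 2)
                   (fun z => g1 z - g1 c - g2 c * (z - c))).
  intros z Hz. split.
  - apply (is_derive_minus _ (fun z => g2 c / 2 * (z - c) ^ 2) z (g1 z - g1 c) (g2 c * (z - c))).
    + apply (is_derive_minus g (fun z => g1 c * (z - c)) z (g1 z) (g1 c)); [apply Hg, Hz |].
      auto_derive; [exact I | ring].
    + auto_derive; [exact I | field].
  - eapply Rle_trans; [apply Hfirst, Hz |].
    apply Rmult_le_compat_l; [exact HM |]. apply pow_incr. split; [apply Rabs_pos | exact Hz].
Qed.

Lemma Rmult_le_0_perturb (x y p q E : R) :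
  E < Rabs p -> E < Rabs q -> p * q <= 0 ->
  Rabs (x - p) <= E -> Rabs (y - q) <= E -> x * y <= 0.
Proof.
  intros Hp Hq Hpq Hx Hy.
  apply Rabs_le_between in Hx. apply Rabs_le_between in Hy.
  unfold Rabs in Hp, Hq. destruct (Rcase_abs p), (Rcase_abs q); nra.
Qed.

Lemma perturbed_parabola_root (g : R -> R) (a c w k E : R) :
  continuity g -> 0 <= k <= Rabs w -> E < Rabs a * k * Rabs w / 2 ->
  (forall x, Rabs (x - c - w) <= k -> Rabs (g x - a / 2 * ((x - c) ^ 2 - w ^ 2)) <= E) ->
  exists x, Rabs (x - c - w) <= k /\ g x = 0.
Proof.
  intros Hg Hk HE Happrox.
  set (q x := a / 2 * ((x - c) ^ 2 - w ^ 2)).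
  assert (Hwk : forall e, e = 1 \/ e = -1 -> Rabs w <= Rabs (2 * w + e * k)).
  { intros e He. unfold Rabs in *.
    destruct He as [-> | ->]; repeat destruct Rcase_abs; lra. }
  assert (Hend : forall e, e = 1 \/ e = -1 -> E < Rabs (q (c + w + e * k))).
  { intros e He. unfold q.
    replace (a / 2 * ((c + w + e * k - c) ^ 2 - w ^ 2)) with (a * (e * k) * (2 * w + e * k) / 2)
      by (destruct He as [-> | ->]; field).
    unfold Rdiv. rewrite !Rabs_mult, (Rabs_pos_eq (/ 2)), (Rabs_pos_eq k) by lra.
    replace (Rabs e) with 1 by (destruct He as [-> | ->]; unfold Rabs; destruct Rcase_abs; lra).
    apply Rlt_le_trans with (1 := HE). unfold Rdiv.
    apply Rmult_le_compat_r; [lra |]. rewrite Rmult_1_l.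
    apply Rmult_le_compat_l, Hwk, He. apply Rmult_le_pos; [apply Rabs_pos | lra]. }
  assert (Hsign : q (c + w + -1 * k) * q (c + w + 1 * k) <= 0).
  { unfold q. replace (c + w + -1 * k - c) with (w - k) by ring.
    replace (c + w + 1 * k - c) with (w + k) by ring.
    assert (k ^ 2 <= w ^ 2) by (rewrite <- (pow2_abs w); apply pow_incr; lra).
    replace (a / 2 * ((w - k) ^ 2 - w ^ 2) * (a / 2 * ((w + k) ^ 2 - w ^ 2)))
      with (- ((a * k) ^ 2 * (4 * w ^ 2 - k ^ 2) / 4)) by field.
    assert (0 <= (a * k) ^ 2) by apply pow2_ge_0. nra. }
  assert (Hprod : g (c + w + -1 * k) * g (c + w + 1 * k) <= 0).
  { apply (Rmult_le_0_perturb _ _ _ _ E (Hend _ (or_intror eq_refl)) (Hend _ (or_introl eq_refl))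
             Hsign);
      apply Happrox; apply Rabs_le_between; lra. }
  assert (Hlohi : c + w + -1 * k <= c + w + 1 * k) by lra.
  destruct (IVT_cor g _ _ Hg Hlohi Hprod) as [x [Hx Hgx]].
  exists x. split; [apply Rabs_le_between; lra | exact Hgx].
Qed.

Lemma perturbed_paraboloid_no_root (U a y s M : R) :
  a <> 0 -> 0 < s -> 4 * M * Rabs y <= Rabs a -> 4 * M * s <= Rabs a ->
  Rabs (U - a * (y ^ 2 / 2 + s)) <= M * (Rabs y ^ 3 + Rabs y * s + s ^ 2) -> U <> 0.
Proof.
  intros Ha Hs Hy Hsa HU ->.
  assert (HA : 0 < Rabs a) by (apply Rabs_pos_lt, Ha).
  assert (0 <= Rabs y ^ 2) by apply pow2_ge_0.
  rewrite Rminus_0_l, Rabs_Ropp, Rabs_mult, <- (pow2_abs y), (Rabs_pos_eq (_ + s)) in HU by lra.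
  set (Y := Rabs y) in *.
  assert (0 <= Y) by apply Rabs_pos.
  destruct (Rle_or_lt 0 M) as [HM | HM]; [| nra].
  assert (M * Y ^ 3 <= Rabs a / 4 * Y ^ 2) by
    (replace (M * Y ^ 3) with (M * Y * Y ^ 2) by ring; apply Rmult_le_compat_r; lra).
  assert (M * (Y * s) <= Rabs a / 4 * s) by
    (rewrite <- Rmult_assoc; apply Rmult_le_compat_r; lra).
  assert (M * s ^ 2 <= Rabs a / 4 * s) by
    (replace (M * s ^ 2) with (M * s * s) by ring; apply Rmult_le_compat_r; lra).
  nra.
Qed.

Lemma pd_is_derive_x (D : R -> R -> Prop) (u : R -> R -> R) (l : list bool) (t x : R) :
  smooth2_on D u -> D t x -> is_derive (fun y => pd l u t y) x (pd (false :: l) u t x).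
Proof. intros Hu Hx. apply Derive_correct, (Hu l t x Hx). Qed.

Lemma pd_is_derive_t (D : R -> R -> Prop) (u : R -> R -> R) (l : list bool) (t x : R) :
  smooth2_on D u -> D t x -> is_derive (fun s => pd l u s x) t (pd (true :: l) u t x).
Proof. intros Hu Hx. apply Derive_correct, (Hu l t x Hx). Qed.

Lemma pd_locally_bounded (D : R -> R -> Prop) (u : R -> R -> R) (ls : list (list bool)) (t x : R) :
  smooth2_on D u -> D t x ->
  exists M, 0 < M /\
    locally (t, x) (fun z => forall l, In l ls -> Rabs (pd l u (fst z) (snd z)) <= M).
Proof.
  intros Hu Hx. induction ls as [| l ls [M [HM Hloc]]].
  - exists 1. split; [lra |]. apply filter_forall. intros z l [].
  - assert (Hcont := proj2 (proj2 (Hu l t x Hx))).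
    apply filterlim_locally with (eps := mkposreal 1 Rlt_0_1) in Hcont.
    exists (Rmax M (Rabs (pd l u t x) + 1)).
    split; [eapply Rlt_le_trans; [exact HM | apply Rmax_l] |].
    generalize (filter_and _ _ Hloc Hcont). apply filter_imp.
    intros z [Hls Hl] l' [<- | Hin].
    + change (Rabs (pd l u (fst z) (snd z) - pd l u t x) < 1) in Hl.
      eapply Rle_trans; [| apply Rmax_r].
      assert (H := Rabs_triang_inv (pd l u (fst z) (snd z)) (pd l u t x)). lra.
    + eapply Rle_trans; [apply Hls, Hin | apply Rmax_l].
Qed.

Lemma functional_choice_on (P : R -> Prop) (Q : R -> R -> Prop) :
  (forall t, P t -> exists x, Q t x) -> exists f : R -> R, forall t, P t -> Q t (f t).
Proof.
  intros H. apply (functional_choice (fun t x => P t -> Q t x)). intros t.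
  destruct (classic (P t)) as [Ht | Ht].
  - destruct (H t Ht) as [x Hx]. exists x. intros _. exact Hx.
  - exists 0. intros Ht'. contradiction.
Qed.

Lemma small_box_bounded (u : R -> R -> R) (ls : list (list bool)) (t0 xi0 A : R) :
  smooth2_on (fun t _ => 0 < t) u -> 0 < t0 -> 0 < A ->
  exists M eps, 0 < M /\ 0 < eps /\ eps <= t0 /\ eps <= 1 /\ 20 * M * eps <= A /\
    forall t x, Rabs (t - t0) < eps -> Rabs (x - xi0) < eps ->
      forall l, In l ls -> Rabs (pd l u t x) <= M.
Proof.
  intros Hu Ht0 HA.
  destruct (pd_locally_bounded _ u ls t0 xi0 Hu Ht0) as [M [HM Hloc]].
  apply (locally_2d_locally (fun t x => forall l, In l ls -> Rabs (pd l u t x) <= M)) in Hloc.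
  destruct Hloc as [r Hr].
  set (eps := Rmin (Rmin r t0) (Rmin 1 (A / (20 * M)))).
  assert (Heps_a : eps <= A / (20 * M)) by (eapply Rle_trans; apply Rmin_r).
  assert (Heps_r : eps <= r) by (eapply Rle_trans; apply Rmin_l).
  exists M, eps. repeat split.
  - exact HM.
  - repeat apply Rmin_pos; try apply cond_pos; try apply Rdiv_lt_0_compat; lra.
  - eapply Rle_trans; [apply Rmin_l | apply Rmin_r].
  - eapply Rle_trans; [apply Rmin_r | apply Rmin_l].
  - replace A with (20 * M * (A / (20 * M))) by (field; lra).
    apply Rmult_le_compat_l; lra.
  - intros t x Ht Hx. apply Hr; lra.
Qed.

Section Fold.

Variables (u : R -> R -> R) (t0 xi0 a M d : R).
Hypothesis Hu : smooth2_on (fun t _ => 0 < t) u.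
Hypothesis Hdt0 : d <= t0.
(* The bounded derivatives are u_xxx, (u_x)_t, u_tt and (u_t)_x. *)
Hypothesis Hbound : forall t x, Rabs (t - t0) < d -> Rabs (x - xi0) < d ->
  forall l, In l [[false; false; false]; [true; false]; [true; true]; [false; true]] ->
  Rabs (pd l u t x) <= M.
Hypothesis Hfold : u t0 xi0 = 0.
Hypothesis Hfold_x : px u t0 xi0 = 0.
Hypothesis Hfold_xx : px (px u) t0 xi0 = a.
Hypothesis Hfold_t : pt u t0 xi0 = a.

Let box_time_pos (t : R) : Rabs (t - t0) < d -> 0 < t.
Proof. intros Ht. apply Rabs_lt_between' in Ht. lra. Qed.

Lemma u_taylor_x (x : R) : Rabs (x - xi0) < d ->
  Rabs (px u t0 x - a * (x - xi0)) <= M * Rabs (x - xi0) ^ 2 /\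
  Rabs (u t0 x - a / 2 * (x - xi0) ^ 2) <= M * Rabs (x - xi0) ^ 3.
Proof.
  intros Hx.
  assert (Ht0 : Rabs (t0 - t0) < d)
    by (rewrite Rminus_diag, Rabs_R0; apply Rle_lt_trans with (2 := Hx), Rabs_pos).
  destruct (taylor2_bound (u t0) (px u t0) (px (px u) t0) (px (px (px u)) t0) xi0 x M)
    as [H1 H2].
  - intros z Hz'. assert (Hz : Rabs (z - xi0) < d) by lra.
    assert (Hpos : 0 < t0) by exact (box_time_pos t0 Ht0).
    refine (conj (pd_is_derive_x _ u [] t0 z Hu Hpos)
           (conj (pd_is_derive_x _ u [false] t0 z Hu Hpos)
           (conj (pd_is_derive_x _ u [false; false] t0 z Hu Hpos) _))).
    apply (Hbound t0 z Ht0 Hz [false; false; false]); simpl; tauto.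
  - rewrite Hfold, Hfold_x, Hfold_xx, Rminus_0_r in *.
    replace (u t0 x - 0 * (x - xi0) - a / 2 * (x - xi0) ^ 2) with (u t0 x - a / 2 * (x - xi0) ^ 2)
      in H2 by ring.
    split; assumption.
Qed.

Let M_nonneg : 0 < d -> 0 <= M.
Proof.
  intros Hd.
  assert (Hc : forall c, Rabs (c - c) < d) by (intros c; rewrite Rminus_diag, Rabs_R0; exact Hd).
  eapply Rle_trans; [apply Rabs_pos | apply (Hbound t0 xi0 (Hc t0) (Hc xi0) [true; true])].
  simpl; tauto.
Qed.

Lemma u_fold_approx (t x : R) : Rabs (t - t0) < d -> Rabs (x - xi0) < d ->
  Rabs (u t x - a / 2 * (x - xi0) ^ 2 - a * (t - t0)) <=
    M * (Rabs (x - xi0) ^ 3 + Rabs (x - xi0) * Rabs (t - t0) + Rabs (t - t0) ^ 2).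
Proof.
  intros Ht Hx.
  assert (Hd : 0 < d) by (apply Rle_lt_trans with (2 := Hx), Rabs_pos).
  assert (HM : 0 <= M) by (apply M_nonneg, Hd).
  assert (Ht0 : Rabs (t0 - t0) < d) by (rewrite Rminus_diag, Rabs_R0; exact Hd).
  assert (Htime : Rabs (u t x - u t0 x - a * (t - t0)) <=
                    (M * Rabs (t - t0) + M * Rabs (x - xi0)) * Rabs (t - t0)).
  { apply (mvt_affine_bound (fun s => u s x) (fun s => pt u s x)). intros s Hs.
    assert (Hs' : Rabs (s - t0) < d) by lra.
    split; [exact (pd_is_derive_t _ u [] s x Hu (box_time_pos s Hs')) |].
    replace (pt u s x - a) with ((pt u s x - pt u t0 x) + (pt u t0 x - pt u t0 xi0))
      by (rewrite Hfold_t; ring).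
    eapply Rle_trans; [apply Rabs_triang | apply Rplus_le_compat].
    - eapply Rle_trans; [| apply Rmult_le_compat_l; [exact HM | exact Hs]].
      apply (mvt_bound (fun s => pt u s x) (fun s => pt (pt u) s x)). intros r Hr.
      assert (Hr' : Rabs (r - t0) < d) by lra.
      split; [exact (pd_is_derive_t _ u [true] r x Hu (box_time_pos r Hr')) |].
      apply (Hbound r x Hr' Hx [true; true]); simpl; tauto.
    - apply (mvt_bound (fun y => pt u t0 y) (fun y => px (pt u) t0 y)). intros y Hy.
      assert (Hy' : Rabs (y - xi0) < d) by lra.
      split; [exact (pd_is_derive_x _ u [true] t0 y Hu (box_time_pos t0 Ht0)) |].
      apply (Hbound t0 y Ht0 Hy' [false; true]); simpl; tauto. }
  assert (Hspace := proj2 (u_taylor_x x Hx)).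
  replace (u t x - a / 2 * (x - xi0) ^ 2 - a * (t - t0))
    with ((u t x - u t0 x - a * (t - t0)) + (u t0 x - a / 2 * (x - xi0) ^ 2)) by ring.
  eapply Rle_trans; [apply Rabs_triang |].
  replace (M * (Rabs (x - xi0) ^ 3 + Rabs (x - xi0) * Rabs (t - t0) + Rabs (t - t0) ^ 2))
    with ((M * Rabs (t - t0) + M * Rabs (x - xi0)) * Rabs (t - t0) + M * Rabs (x - xi0) ^ 3)
    by ring.
  lra.
Qed.

Lemma ux_fold_approx (t x : R) : Rabs (t - t0) < d -> Rabs (x - xi0) < d ->
  Rabs (px u t x - a * (x - xi0)) <= M * (Rabs (t - t0) + Rabs (x - xi0) ^ 2).
Proof.
  intros Ht Hx.
  assert (Htime : Rabs (px u t x - px u t0 x) <= M * Rabs (t - t0)).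
  { apply (mvt_bound (fun s => px u s x) (fun s => pt (px u) s x)). intros s Hs.
    assert (Hs' : Rabs (s - t0) < d) by lra.
    split; [exact (pd_is_derive_t _ u [false] s x Hu (box_time_pos s Hs')) |].
    apply (Hbound s x Hs' Hx [true; false]); simpl; tauto. }
  assert (Hspace := proj1 (u_taylor_x x Hx)).
  replace (px u t x - a * (x - xi0)) with ((px u t x - px u t0 x) + (px u t0 x - a * (x - xi0)))
    by ring.
  eapply Rle_trans; [apply Rabs_triang | lra].
Qed.

Variable eps : R.
Hypothesis HM : 0 < M.
Hypothesis Ha : a <> 0.
Hypothesis Heps : 0 < eps.
Hypothesis Heps_d : eps <= d.
Hypothesis Heps_1 : eps <= 1.
Hypothesis Heps_a : 20 * M * eps <= Rabs a.

Lemma fold_no_roots_after (t x : R) :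
  t0 < t < t0 + eps ^ 2 / 8 -> Rabs (x - xi0) < eps -> u t x <> 0.
Proof.
  intros Ht Hx.
  assert (Hs : t - t0 < eps) by nra.
  assert (Hts : Rabs (t - t0) = t - t0) by (apply Rabs_pos_eq; lra).
  apply (perturbed_paraboloid_no_root _ a (x - xi0) (t - t0) M Ha); [lra | nra | nra |].
  replace (u t x - a * ((x - xi0) ^ 2 / 2 + (t - t0)))
    with (u t x - a / 2 * (x - xi0) ^ 2 - a * (t - t0)) by field.
  eapply Rle_trans; [apply u_fold_approx; lra | rewrite Hts; apply Rle_refl].
Qed.

Let branch_scale (t w : R) : t0 - eps ^ 2 / 8 < t < t0 -> w ^ 2 = 2 * (t0 - t) ->
  0 < Rabs w /\ 2 * Rabs w < eps /\ Rabs (t - t0) = t0 - t /\ t0 - t < d.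
Proof.
  intros Ht Hw.
  assert (Hv2 : Rabs w ^ 2 = 2 * (t0 - t)) by (rewrite pow2_abs; exact Hw).
  assert (0 <= Rabs w) by apply Rabs_pos.
  split; [nra |]. split.
  - destruct (Rlt_or_le (2 * Rabs w) eps) as [Hlt | Hge]; [exact Hlt |].
    assert (eps * eps <= (2 * Rabs w) * (2 * Rabs w)) by (apply Rmult_le_compat; lra). nra.
  - split; [rewrite Rabs_minus_sym; apply Rabs_pos_eq; lra | nra].
Qed.

Lemma u_near_branch (t w x : R) :
  t0 - eps ^ 2 / 8 < t < t0 -> w ^ 2 = 2 * (t0 - t) -> Rabs (x - xi0) <= 2 * Rabs w ->
  Rabs (u t x - a / 2 * ((x - xi0) ^ 2 - w ^ 2)) <=
    M * ((2 * Rabs w) ^ 3 + 2 * Rabs w * (t0 - t) + (t0 - t) ^ 2).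
Proof.
  intros Ht Hw Hx.
  destruct (branch_scale t w Ht Hw) as (Hv & Hv_eps & Hts & Hsd).
  assert (0 <= Rabs (x - xi0)) by apply Rabs_pos.
  replace (u t x - a / 2 * ((x - xi0) ^ 2 - w ^ 2))
    with (u t x - a / 2 * (x - xi0) ^ 2 - a * (t - t0)) by (rewrite Hw; field).
  eapply Rle_trans; [apply u_fold_approx; lra |].
  rewrite Hts. apply Rmult_le_compat_l; [lra |].
  assert (Rabs (x - xi0) ^ 3 <= (2 * Rabs w) ^ 3) by (apply pow_incr; lra).
  assert (0 <= t0 - t) by lra.
  nra.
Qed.

Lemma ux_near_branch (t w x : R) :
  t0 - eps ^ 2 / 8 < t < t0 -> w ^ 2 = 2 * (t0 - t) -> Rabs (x - xi0) <= 2 * Rabs w ->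
  Rabs (x - xi0 - w) <= 40 * M / Rabs a * (t0 - t) ->
  Rabs (px u t x - a * w) <= 49 * M * (t0 - t).
Proof.
  intros Ht Hw Hx Hxw.
  destruct (branch_scale t w Ht Hw) as (Hv & Hv_eps & Hts & Hsd).
  assert (HA : 0 < Rabs a) by (apply Rabs_pos_lt, Ha).
  replace (px u t x - a * w) with ((px u t x - a * (x - xi0)) + a * (x - xi0 - w)) by ring.
  eapply Rle_trans; [apply Rabs_triang |]. rewrite Rabs_mult.
  assert (Hux := ux_fold_approx t x ltac:(lra) ltac:(lra)).
  rewrite Hts in Hux.
  assert (Rabs (x - xi0) ^ 2 <= (2 * Rabs w) ^ 2)
    by (apply pow_incr; split; [apply Rabs_pos | lra]).
  replace ((2 * Rabs w) ^ 2) with (8 * (t0 - t)) in * by (rewrite <- (pow2_abs w) in Hw; nra).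
  assert (Rabs a * Rabs (x - xi0 - w) <= 40 * M * (t0 - t))
    by (replace (40 * M * (t0 - t)) with (Rabs a * (40 * M / Rabs a * (t0 - t))) by (field; lra);
        apply Rmult_le_compat_l; lra).
  nra.
Qed.

Lemma fold_roots_before (t w : R) :
  t0 - eps ^ 2 / 8 < t < t0 -> w ^ 2 = 2 * (t0 - t) ->
  exists x, u t x = 0 /\ Rabs (x - xi0) < eps /\
    Rabs (x - xi0 - w) <= 40 * M / Rabs a * (t0 - t) /\
    Rabs (px u t x - a * w) <= 49 * M * (t0 - t).
Proof.
  intros Ht Hw.
  destruct (branch_scale t w Ht Hw) as (Hv & Hv_eps & Hts & Hsd).
  assert (HA : 0 < Rabs a) by (apply Rabs_pos_lt, Ha).
  set (v := Rabs w) in *.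
  assert (Hv2 : v ^ 2 = 2 * (t0 - t)) by (unfold v; rewrite pow2_abs; exact Hw).
  (* At xi0 + w +- k the parabola is of size |a| k v / 2 = 10 M v^3, above the remainder
     M ((2 v)^3 + 2 v s + s^2) = (9 + v / 4) M v^3, where s = t0 - t = v^2 / 2. *)
  set (k := 20 * M / Rabs a * v ^ 2).
  assert (Hk : k = 40 * M / Rabs a * (t0 - t)) by (unfold k; rewrite Hv2; field; lra).
  assert (Hkv : k <= v).
  { unfold k. apply (Rmult_le_reg_l (Rabs a)); [exact HA |].
    replace (Rabs a * (20 * M / Rabs a * v ^ 2)) with ((20 * M * v) * v) by (field; lra).
    apply Rmult_le_compat_r; nra. }
  assert (Hnear : forall x, Rabs (x - xi0 - w) <= k -> Rabs (x - xi0) <= 2 * v).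
  { intros x Hx. replace (x - xi0) with ((x - xi0 - w) + w) by ring.
    eapply Rle_trans; [apply Rabs_triang | fold v; lra]. }
  destruct (perturbed_parabola_root (u t) a xi0 w k
              (M * ((2 * v) ^ 3 + 2 * v * (t0 - t) + (t0 - t) ^ 2))) as [x [Hxw Hux]].
  - intros y. apply continuity_pt_filterlim, (ex_derive_continuous (u t)).
    exists (px u t y). apply (pd_is_derive_x _ u [] t y Hu), box_time_pos. lra.
  - split; [rewrite Hk; apply Rmult_le_pos; [apply Rle_mult_inv_pos |]; lra | exact Hkv].
  - replace (Rabs a * k * Rabs w / 2) with (10 * M * v ^ 3) by (unfold k, v; field; lra).
    replace (t0 - t) with (v ^ 2 / 2) by lra.
    replace (M * ((2 * v) ^ 3 + 2 * v * (v ^ 2 / 2) + (v ^ 2 / 2) ^ 2))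
      with (M * v ^ 3 * (9 + v / 4)) by field.
    replace (10 * M * v ^ 3) with (M * v ^ 3 * 10) by ring.
    apply Rmult_lt_compat_l; [apply Rmult_lt_0_compat; [lra | apply pow_lt; lra] | lra].
  - intros x Hx. apply u_near_branch, Hnear, Hx; assumption.
  - rewrite Hk in Hxw. exists x.
    split; [exact Hux |].
    split; [apply Rle_lt_trans with (2 * v); [apply Hnear; rewrite Hk |]; lra |].
    split; [exact Hxw |].
    apply ux_near_branch; [exact Ht | exact Hw | apply Hnear; rewrite Hk | ]; assumption.
Qed.

Lemma fold_root_branches : exists xi1 xi2 : R -> R,
  forall t, t0 - eps ^ 2 / 8 < t < t0 ->
    u t (xi1 t) = 0 /\ u t (xi2 t) = 0 /\
    Rabs (xi1 t - xi0) < eps /\ Rabs (xi2 t - xi0) < eps /\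
    Rabs (xi1 t - xi0 - sqrt (2 * (t0 - t))) <= (40 * M / Rabs a + 49 * M) * (t0 - t) /\
    Rabs (xi2 t - xi0 + sqrt (2 * (t0 - t))) <= (40 * M / Rabs a + 49 * M) * (t0 - t) /\
    Rabs (px u t (xi1 t) - sqrt (2 * (t0 - t)) * a) <= (40 * M / Rabs a + 49 * M) * (t0 - t) /\
    Rabs (px u t (xi2 t) + sqrt (2 * (t0 - t)) * a) <= (40 * M / Rabs a + 49 * M) * (t0 - t).
Proof.
  assert (Hsqrt : forall t, t < t0 -> sqrt (2 * (t0 - t)) ^ 2 = 2 * (t0 - t))
    by (intros t Ht; apply pow2_sqrt; lra).
  assert (Hsqrt' : forall t, t < t0 -> (- sqrt (2 * (t0 - t))) ^ 2 = 2 * (t0 - t))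
    by (intros t Ht; rewrite <- (Hsqrt t Ht) at 2; ring).
  destruct (functional_choice_on _ _
              (fun t Ht => fold_roots_before t _ Ht (Hsqrt t (proj2 Ht)))) as [xi1 Hxi1].
  destruct (functional_choice_on _ _
              (fun t Ht => fold_roots_before t _ Ht (Hsqrt' t (proj2 Ht)))) as [xi2 Hxi2].
  exists xi1, xi2. intros t Ht.
  destruct (Hxi1 t Ht) as (Hu1 & Hn1 & Hp1 & Hd1).
  destruct (Hxi2 t Ht) as (Hu2 & Hn2 & Hp2 & Hd2).
  assert (0 <= 40 * M / Rabs a * (t0 - t))
    by (apply Rmult_le_pos; [apply Rle_mult_inv_pos; [| apply Rabs_pos_lt] |]; lra).
  assert (0 <= 49 * M * (t0 - t)) by (apply Rmult_le_pos; lra).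
  rewrite Rmult_plus_distr_r.
  replace (xi2 t - xi0 + sqrt (2 * (t0 - t))) with (xi2 t - xi0 - - sqrt (2 * (t0 - t))) by ring.
  replace (px u t (xi1 t) - sqrt (2 * (t0 - t)) * a)
    with (px u t (xi1 t) - a * sqrt (2 * (t0 - t))) by ring.
  replace (px u t (xi2 t) + sqrt (2 * (t0 - t)) * a)
    with (px u t (xi2 t) - a * - sqrt (2 * (t0 - t))) by ring.
  repeat split; try assumption; lra.
Qed.

End Fold.

Theorem proposition4p1
  (f u0 : R -> R) (u : R -> R -> R) (t0 xi0 : R)
  (Hf : smooth1 f)
  (Hf0 : Derive f 0 = 0)
  (Hu0 : smooth1 u0)
  (Hu0b : forall n : nat, exists M : R, forall x : R, Rabs (Derive_n u0 n x) <= M)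
  (Hu : smooth2_on (fun t _ => 0 < t) u)
  (Hpde : forall t x, 0 < t ->
     pt u t x = px (px u) t x + Derive f (u t x) * px u t x)
  (Hinit : forall x, filterlim (fun z : R * R => u (fst z) (snd z))
             (within (fun z : R * R => 0 < fst z) (locally (0, x)))
             (locally (u0 x)))
  (Ht0 : 0 < t0)
  (Hz : u t0 xi0 = 0)
  (Hzx : px u t0 xi0 = 0)
  (Hzxx : px (px u) t0 xi0 <> 0) :
  exists (delta eps C : R) (xi1 xi2 : R -> R),
    0 < delta /\ 0 < eps /\
    (forall t, t0 - delta < t < t0 ->
       u t (xi1 t) = 0 /\ u t (xi2 t) = 0 /\
       Rabs (xi1 t - xi0) < eps /\ Rabs (xi2 t - xi0) < eps /\
       Rabs (xi1 t - xi0 - sqrt (2 * (t0 - t))) <= C * (t0 - t) /\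
       Rabs (xi2 t - xi0 + sqrt (2 * (t0 - t))) <= C * (t0 - t) /\
       Rabs (px u t (xi1 t) - sqrt (2 * (t0 - t)) * px (px u) t0 xi0)
         <= C * (t0 - t) /\
       Rabs (px u t (xi2 t) + sqrt (2 * (t0 - t)) * px (px u) t0 xi0)
         <= C * (t0 - t)) /\
    (forall t x, t0 < t < t0 + delta -> Rabs (x - xi0) < eps -> u t x <> 0).
Proof.
  (* The hypotheses on f and u0 merely describe where u comes from. *)
  set (a := px (px u) t0 xi0) in *.
  assert (Hzt : pt u t0 xi0 = a) by (rewrite (Hpde t0 xi0 Ht0), Hzx; unfold a; ring).
  destruct (small_box_bounded u [[false; false; false]; [true; false]; [true; true]; [false; true]]
              t0 xi0 (Rabs a) Hu Ht0 (Rabs_pos_lt _ Hzxx))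
    as (M & eps & HM & Heps & Heps_t0 & Heps_1 & Heps_a & Hbox).
  destruct (fold_root_branches u t0 xi0 a M eps Hu Heps_t0 Hbox Hz Hzx eq_refl Hzt
              eps HM Hzxx Heps (Rle_refl eps) Heps_1 Heps_a) as (xi1 & xi2 & Hbranches).
  exists (eps ^ 2 / 8), eps, (40 * M / Rabs a + 49 * M), xi1, xi2.
  split; [apply Rdiv_lt_0_compat; [apply pow_lt |]; lra |].
  split; [exact Heps |].
  split; [exact Hbranches |].
  intros t x Ht Hx.
  exact (fold_no_roots_after u t0 xi0 a M eps Hu Heps_t0 Hbox Hz Hzx eq_refl Hzt
           eps HM Hzxx Heps (Rle_refl eps) Heps_1 Heps_a t x Ht Hx).
Qed.
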